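(* Let $(X,c)$ be a finite metric space, let $k\ge 1$, let $M\subseteq X$ with $|M| = k$, and let $R\subseteq X$ with $|R| = j > k$. Then $$\min_{r\in R}\ \mathrm{cost}(R\setminus\{r\}) - \mathrm{cost}(R) \;\le\; \frac{2}{j-k}\,\mathrm{cost}(M).$$ In particular, if $R_j$ and $R_{j-1}$ are consecutive sets produced by the Reverse Greedy algorithm, with $j>k$, then $\mathrm{cost}(R_{j-1})-\mathrm{cost}(R_j) \le \frac{2}{j-k}\,\mathrm{cost}(M)$.
   Context: For $x\in X$ and nonempty $F\subseteq X$, $c_{xF}=\min_{f\in F}c_{xf}$, and $\mathrm{cost}(F)=\sum_{x\in X} c_{xF}$. The Reverse Greedy algorithm on an $n$-point space $X$: set $R_n = X$; for $t = n, n-1,\dots,2$, set $R_{t-1} = R_t\setminus\{r_t\}$ where $r_t\in R_t$ is chosen (ties broken arbitrarily) to minimize $\mathrm{cost}(R_{t-1})$. *)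

From mathcomp Require Import all_boot all_order all_algebra.
Set Implicit Arguments. Unset Strict Implicit. Unset Printing Implicit Defensive.
Import Order.TTheory GRing.Theory Num.Theory.
Local Open Scope ring_scope.

Definition is_metric (R : realFieldType) (X : finType) (c : X -> X -> R) :=
  [/\ forall x y, 0 <= c x y,
      forall x y, c x y = 0 <-> x = y,
      forall x y, c x y = c y x &
      forall x y z, c x z <= c x y + c y z].

(* Upper bound on all distances; used only as the neutral element of the
   min below, which is only ever applied to nonempty F. *)
Definition cbound (R : realFieldType) (X : finType) (c : X -> X -> R) : R :=
  \sum_(y : X) \sum_(z : X) `|c y z|.

Definition cdist (R : realFieldType) (X : finType) (c : X -> X -> R)
  (x : X) (F : {set X}) : R :=
  \big[Num.min/cbound c]_(f in F) c x f.

Definition cost (R : realFieldType) (X : finType) (c : X -> X -> R)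
  (F : {set X}) : R :=
  \sum_(x : X) cdist c x F.

Definition rg_step (R : realFieldType) (X : finType) (c : X -> X -> R)
  (Rj Rj1 : {set X}) : Prop :=
  exists2 r, r \in Rj &
    Rj1 = Rj :\ r /\ forall r', r' \in Rj -> cost c (Rj :\ r) <= cost c (Rj :\ r').

From mathcomp Require Import all_boot all_order all_algebra.
From mathcomp Require Import zify.
Import Order.TTheory GRing.Theory Num.Theory.
Set Implicit Arguments. Unset Strict Implicit. Unset Printing Implicit Defensive.
Local Open Scope ring_scope.

(* Fix M and R with |R| > |M|, a nearest-point map n into R and m into M, and
   let S be the set of points of R that are not n(m(x)) for any x. Removing
   r in S only hurts the points x with n x = r, and each of them can move to
   n(m(x)) in R \ {r} at extra cost at most 2 c_{xM}, by the triangle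
   inequality through m(x). Summing over r in S, the total loss is at most
   2 cost(M), and |S| >= |R| - |M|, so the cheapest removal in S costs at
   most 2 cost(M) / (|R| - |M|). *)

Section NearestCenter.
Variables (R : realFieldType) (X : finType) (c : X -> X -> R).

Lemma le_cbound x y : c x y <= cbound c.
Proof.
rewrite /cbound (bigD1 x) //= (bigD1 y) //= -addrA.
apply: le_trans (ler_norm _) _; rewrite lerDl.
by rewrite addr_ge0 ?sumr_ge0 // => z _; rewrite sumr_ge0.
Qed.

Lemma cdist_le x (F : {set X}) f : f \in F -> cdist c x F <= c x f.
Proof. exact: bigmin_le_cond. Qed.

(* No nonemptiness needed: over the empty set [cdist] is the upper bound [cbound]. *)
Lemma cdist_subset x (F G : {set X}) : F \subset G -> cdist c x G <= cdist c x F.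
Proof.
move=> sFG; apply/bigmin_geP; split; first exact: bigmin_le_id.
by move=> f Ff; apply/cdist_le/(subsetP sFG).
Qed.

Lemma cost_subset (F G : {set X}) : F \subset G -> cost c G <= cost c F.
Proof. by move=> sFG; apply: ler_sum => x _; apply: cdist_subset. Qed.

Definition nearest (F : {set X}) (f0 x : X) : X := [arg min_(f < f0 in F) c x f]%O.

Variables (F : {set X}) (f0 : X).
Hypothesis Ff0 : f0 \in F.

Lemma nearest_in x : nearest F f0 x \in F.
Proof. by rewrite /nearest; case: arg_minP. Qed.

Lemma cdist_nearest x : cdist c x F = c x (nearest F f0 x).
Proof. by apply: bigmin_eq_arg => // f _; apply: le_cbound. Qed.

End NearestCenter.

Section RemovalGain.
Variables (R : realFieldType) (X : finType) (c : X -> X -> R).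
Hypothesis hc : is_metric c.

Lemma cdist_ge0 x (F : {set X}) : 0 <= cdist c x F.
Proof.
case: hc => c_ge0 _ _ _; apply/bigmin_geP; split=> [|f _].
  exact: le_trans (c_ge0 x x) (le_cbound c x x).
exact: c_ge0.
Qed.

Lemma cdist_triangle x y (F : {set X}) f0 : f0 \in F ->
  cdist c x F <= c x y + cdist c y F.
Proof.
case: hc => _ _ _ c_tri Ff0; rewrite (cdist_nearest c Ff0 y).
exact: le_trans (cdist_le c x (nearest_in c Ff0 y)) (c_tri _ _ _).
Qed.

Variables (M Rs : {set X}) (m0 r0 : X).
Hypotheses (Mm0 : m0 \in M) (Rr0 : r0 \in Rs).

Let nM := nearest c M m0.
Let nR := nearest c Rs r0.

Lemma cdist_setD1_le r x : r \notin nR @: M ->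
  cdist c x (Rs :\ r) <= cdist c x Rs + cdist c x M *+ 2.
Proof.
case: hc => _ _ c_sym c_tri nRMr.
have nRnM_r : nR (nM x) \in Rs :\ r.
  rewrite !inE nearest_in // andbT; apply: contraNneq nRMr => <-.
  by rewrite imset_f // nearest_in.
apply: le_trans (cdist_le c x nRnM_r) _.
apply: le_trans (c_tri _ (nM x) _) _.
rewrite (cdist_nearest c Mm0 x) -/nM mulr2n addrCA lerD2l /nR -cdist_nearest //.
by rewrite c_sym addrC; apply: cdist_triangle Rr0.
Qed.

Lemma cdist_setD1_gain r x : r \notin nR @: M ->
  cdist c x (Rs :\ r) - cdist c x Rs <= if nR x == r then cdist c x M *+ 2 else 0.
Proof.
move=> nRMr; rewrite lerBlDl; case: eqP => [_ | nRx_r].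
  exact: cdist_setD1_le.
rewrite addr0 (cdist_nearest c Rr0 x); apply: cdist_le.
by rewrite !inE nearest_in // andbT; apply/eqP.
Qed.

Let S := Rs :\: nR @: M.

Lemma card_removable : (#|Rs| - #|M| <= #|S|)%N.
Proof.
rewrite cardsD leq_sub2l // (leq_trans _ (leq_imset_card nR M)) //.
exact/subset_leq_card/subsetIr.
Qed.

Lemma sum_removal_gain :
  \sum_(r in S) (cost c (Rs :\ r) - cost c Rs) <= cost c M *+ 2.
Proof.
have gain_r r : r \in S -> cost c (Rs :\ r) - cost c Rs <=
    \sum_(x | nR x == r) cdist c x M *+ 2.
  rewrite inE => /andP[nRMr _]; rewrite /cost -sumrB [leRHS]big_mkcond /=.
  by apply: ler_sum => x _; apply: cdist_setD1_gain.
apply: le_trans (ler_sum _ gain_r) _.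
have -> : \sum_(r in S) \sum_(x | nR x == r) cdist c x M *+ 2 =
    \sum_(x | nR x \in S) cdist c x M *+ 2.
  rewrite [RHS](partition_big nR (mem S)) //; apply: eq_bigr => r Sr.
  by apply: eq_bigl => x; case: eqP => [->|]; rewrite ?Sr ?andbF.
rewrite /cost -sumrMnl [leRHS](bigID (fun x => nR x \in S)) /= lerDl.
by apply: sumr_ge0 => x _; rewrite mulrn_wge0 // cdist_ge0.
Qed.

Lemma removal_gain_bound : (#|M| < #|Rs|)%N ->
  exists2 r, r \in Rs & (cost c (Rs :\ r) - cost c Rs) *+ (#|Rs| - #|M|) <= cost c M *+ 2.
Proof.
move=> ltMR; have S_gt0 : (0 < #|S|)%N by have := card_removable; lia.
have [s1 Ss1] := card_gt0P S_gt0.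
pose r := [arg min_(s < s1 in S) cost c (Rs :\ s)]%O.
have [Sr r_min] : r \in S /\ forall s, s \in S -> cost c (Rs :\ r) <= cost c (Rs :\ s).
  by rewrite /r; case: arg_minP.
have Rr : r \in Rs by move: Sr; rewrite inE => /andP[].
exists r => //; apply: le_trans (sum_removal_gain).
apply: le_trans (_ : _ *+ #|S| <= _).
  by apply: ler_wpMn2l (card_removable); rewrite subr_ge0 cost_subset ?subD1set.
by rewrite -sumr_const; apply: ler_sum => s Ss; rewrite lerD2r r_min.
Qed.

End RemovalGain.

Theorem mainTheorem3 (R : realFieldType) (X : finType) (c : X -> X -> R)
  (hc : is_metric c) (k j : nat) (M Rs : {set X})
  (hk : (1 <= k)%N) (hM : #|M| = k) (hR : #|Rs| = j) (hjk : (k < j)%N) :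
  (exists2 r, r \in Rs &
     cost c (Rs :\ r) - cost c Rs <= 2 / (j - k)%:R * cost c M)
  /\ (forall Rs1 : {set X}, rg_step c Rs Rs1 ->
        cost c Rs1 - cost c Rs <= 2 / (j - k)%:R * cost c M).
Proof.
have [m0 Mm0] : exists m0, m0 \in M by apply/card_gt0P; lia.
have [r0 Rr0] : exists r0, r0 \in Rs by apply/card_gt0P; lia.
have ltMR : (#|M| < #|Rs|)%N by rewrite hM hR.
have [r Rr gain_r] := removal_gain_bound hc Mm0 Rr0 ltMR.
have bound : cost c (Rs :\ r) - cost c Rs <= 2 / (j - k)%:R * cost c M.
  rewrite mulrAC ler_pdivlMr ?ltr0n ?subn_gt0 // mulr_natr mulr_natl.
  by rewrite -hM -hR.
split; first by exists r.
move=> _ [r1 Rr1 [-> r1_min]]; apply: le_trans bound.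
by rewrite lerD2r r1_min.
Qed.
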